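(* Let $D=(N,A)$, $\mathcal{K}$, $\{D^k\}_{k\in\mathcal{K}}$ be an instance of SND-RR with time horizon $T$, $\mathcal{A}$ a valid arc partition, $G=G(D,\mathcal{A})=(V,E)$ the auxiliary flat network, and $G_S=(V_S,E_S\cup F_S)$ a partial network of $G$ satisfying properties (P1$'$) and (P2$'$) below. Then the optimal value of SND-RR$(G_S)$ is a lower bound on the optimal value of SND-RR$(G_T)$. (P1$'$) For all $k\in\mathcal{K}$, $(o'_k,r_k)\in V_S$ and $(d^0_k,l_k)\in V_S$; for all $v\in N$, $(v^0,T)\in V_S$ and $(u,0)\in V_S$ for all $u\in\mathcal{V}(v)$. (P2$'$) For all $xz\in E$ and all $(x,t)\in V_S$ with $t+\tau_{xz}\le T$, we have $((x,t),(z,t'))\in E_S$ where $t'=\max\{r: r\le t+\tau_{xz},\ (z,r)\in V_S\}$.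
   Context: An instance of SND-RR consists of: a directed graph $D=(N,A)$; for each $vw\in A$ a transit time $\tau_{vw}\in\mathbb{Z}_{>0}$, fixed cost $f_{vw}>0$, capacity $u_{vw}\in\mathbb{Z}_{>0}$, per-unit cost $c^k_{vw}>0$ for each commodity $k$; commodities $\mathcal{K}$, each with origin $o_k$, destination $d_k$, demand $q_k$, release time $r_k$, deadline $l_k$ (integers, earliest release $0$); subgraphs $D^k=(N^k,A^k)\subseteq D$ with $\delta^+_{D^k}(d_k)=\emptyset$ and $\delta^+_{D^k}(v)\ne\emptyset$ for $v\in N^k\setminus\{d_k\}$. $T=\max_kl_k$, $[T]=\{0,\dots,T\}$. For a timed arc $a=((v,t),(w,t'))$ with underlying arc $vw$: $u_a=u_{vw}$, $f_a=f_{vw}$, $c^k_a=c^k_{vw}$, $\tau_a=\tau_{vw}$ (not $t'-t$). $x^k(S)=\sum_{a\in S}x^k_a$; $\delta^\pm_H(v,t)$ are outgoing/incoming timed arcs in $H$. Valid partition: $\mathcal{A}=\{\mathcal{A}_v\}_{v\in N}$, each $\mathcal{A}_v$ a partition of $\delta^+_D(v)$, such that for each $k$, $\delta^+_{D^k}(v)\subseteq A_i$ for some $A_i\in\mathcal{A}_v$. Auxiliary network $G=(V,E)$: $\mathcal{V}(v)=\{v^0,\dots,v^{|\mathcal{A}_v|}\}$ (copy $v^i$ per part $A_i\in\mathcal{A}_v$, terminal copy $v^0$), $V=\bigcup_v\mathcal{V}(v)$, $E=\{v^iw^j:vw\in A_i\in\mathcal{A}_v,w^j\in\mathcal{V}(w)\}$,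 each $v^iw^j$ with the transit time and costs of $vw$. With $\mathcal{K}(A_i)=\{k:\emptyset\ne\delta^+_{D^k}(v)\subseteq A_i\}$: $G^k=(V^k,E^k)$, $V^k=\{v^i:v\in N^k,A_i\in\mathcal{A}_v,k\in\mathcal{K}(A_i)\}\cup\{d^0_k\}$, $E^k=\{v^iw^j:vw\in A^k,v^i,w^j\in V^k\}$; $o'_k$ is the unique copy of $o_k$ in $V^k$. Full time-expanded network of $G$: $G_T=(V_T,E_T\cup F_T)$ with $V_T=V\times[T]$, movement arcs $((x,t),(z,t+\tau_{xz}))$ for $xz\in E$, $t+\tau_{xz}\le T$, holdover arcs $((x,t),(x,t+1))$; similarly $G^k_T=(V^k_T,E^k_T\cup F^k_T)$, and $D_T=(N_T,A_T\cup H_T)$ for $D$. For $a=((v,t),(w,t'))\in A_T$, $\mathcal{E}_T(a)=\{((v^i,t),(w^j,t')):vw\in A_i\in\mathcal{A}_v,w^j\in\mathcal{V}(w)\}$. SND-RR$(G_T)$: minimize $\sum_{a\in A_T}f_ay_a+\sum_k\sum_{e\in E_T}c^k_eq_kx^k_e$ s.t. for all $k$, $(x,t)\in V^k_T$: $x^k(\delta^+_{G^k_T}(x,t))-x^k(\delta^-_{G^k_T}(x,t))$ is $1$ at $(o'_k,r_k)$, $-1$ at $(d^0_k,l_k)$, $0$ otherwise; $\sum_k\sum_{e\in\mathcal{E}_T(a)}q_kx^k_e\le u_ay_a$ for $a\in A_T$; $x^k_e\in\{0,1\}$ for $e\in E^k_T\cup F^k_T$ ($0$ otherwise); $y_a\in\mathbb{Z}_{\ge0}$.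 A partial network of $G$ is $G_S=(V_S,E_S\cup F_S)$ with $V_S\subseteq V_T$, $E_S\subseteq\{((x,t),(z,t')):(x,t)\in V_T,xz\in E,t'\le t+\tau_{xz}\le T\}$, and $F_S$ the holdover arcs joining each $(x,t)\in V_S$ to the next copy of $x$ in $V_S$. $G^k_S=(V^k_S,E^k_S\cup F^k_S)$: $V^k_S=\{(x,t)\in V_S:x\in V^k\}$, $E^k_S=\{((x,t),(z,t'))\in E_S:xz\in E^k\}$, $F^k_S$ the arcs of $F_S$ on copies of nodes of $V^k$. The associated partial network of $D$ is $D_S(G_S)=(N_S,A_S\cup H_S)$ with $N_S=\{(v,t):(u,t)\in V_S\text{ for some }u\in\mathcal{V}(v)\}$ and $A_S=\{((v,t),(w,t')):(v,t)\in N_S,vw\in A,t+\tau_{vw}\le T,t'=\max\{r:r\le t+\tau_{vw},(w,r)\in N_S\}\}$. For $a=((v,t),(w,t'))\in A_S$, $\mathcal{E}_S(a)=\{((v^i,t),(w^j,t''))\in E_S: w^j\in\mathcal{V}(w), vw\in A_i\in\mathcal{A}_v\}$. SND-RR$(G_S)$: minimize $\sum_{a\in A_S}f_ay_a+\sum_k\sum_{e\in E_S}c^k_eq_kx^k_e$ s.t. for all $k$, $(x,t)\in V^k_S$: $x^k(\delta^+_{G^k_S}(x,t))-x^k(\delta^-_{G^k_S}(x,t))$ is $1$ at $(o'_k,r_k)$, $-1$ at $(d^0_k,l_k)$, $0$ otherwise; $\sum_k\sum_{e\in\mathcal{E}_S(a)}q_kx^k_e\le u_ay_a$ for all $a\in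 A_S$; $\sum_{e\in E^k_S}\tau_ex^k_e\le l_k-r_k$ for all $k$; $x^k_e\in\{0,1\}$ for $e\in E^k_S\cup F^k_S$ ($0$ otherwise); $y_a\in\mathbb{Z}_{\ge0}$ for $a\in A_S$. *)

From HB Require Import structures.
From mathcomp Require Import all_boot all_order all_algebra.
Set Implicit Arguments. Unset Strict Implicit. Unset Printing Implicit Defensive.
Import Order.TTheory GRing.Theory Num.Theory.

Local Open Scope ring_scope.

(* An SND-RR instance: digraph D = (N, A) (A given as a relation on N),
   commodities K, per-commodity subgraphs D^k = (N^k, A^k). *)
Record instance (R : realFieldType) := Instance {
  node : finType;
  comm : finType;
  arc : rel node;
  tau : node -> node -> nat;
  fc : node -> node -> R;
  cap : node -> node -> nat;
  uc : comm -> node -> node -> R;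
  orig : comm -> node;
  dest : comm -> node;
  dem : comm -> nat;
  rel_t : comm -> nat;
  dl : comm -> nat;
  knode : comm -> pred node;
  karc : comm -> rel node
}.

Arguments node {R} i.
Arguments comm {R} i.
Arguments arc {R} i.
Arguments tau {R} i.
Arguments fc {R} i.
Arguments cap {R} i.
Arguments uc {R} i.
Arguments orig {R} i.
Arguments dest {R} i.
Arguments dem {R} i.
Arguments rel_t {R} i.
Arguments dl {R} i.
Arguments knode {R} i.
Arguments karc {R} i.

Section SND.
Variable R : realFieldType.
Variable I : instance R.

Local Notation N := (node I).
Local Notation K := (comm I).

Definition wf_instance : Prop :=
  [/\ (forall v w, arc I v w ->
         [/\ (0 < tau I v w)%N, 0 < fc I v w, (0 < cap I v w)%N
           & forall k, 0 < uc I k v w]),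
      (exists k, rel_t I k = 0%N),
      (forall k v w, karc I k v w ->
         [/\ arc I v w, knode I k v & knode I k w]),
      (forall k, knode I k (orig I k) /\ knode I k (dest I k))
    & (forall k w, ~~ karc I k (dest I k) w)
    ] /\ (forall k v, knode I k v -> v != dest I k ->
         exists w, karc I k v w).

Definition Tmax : nat := (\max_(k : K) dl I k)%N.

Local Notation T := Tmax.

(* Outgoing arc sets identified with their sets of heads *)
Definition outD (v : N) : {set N} := [set w | arc I v w].
Definition outDk (k : K) (v : N) : {set N} := [set w | karc I k v w].

Variable part : N -> {set {set N}}.

Definition valid_partition : Prop :=
  forall v, partition (part v) (outD v) /\
    forall k, outDk k v != set0 ->
      exists2 P, P \in part v & outDk k v \subset P.

(* Nodes of G: (v, None) = v^0, (v, Some P) = the copy v^i for part P = A_i *)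
Definition aux := (N * option {set N})%type.

Definition inV (x : aux) : bool :=
  if x.2 is Some P then P \in part x.1 else true.

Definition inKpart (k : K) (v : N) (P : {set N}) : bool :=
  (outDk k v != set0) && (outDk k v \subset P).

Definition inE (x z : aux) : bool :=
  inV x && inV z &&
  (if x.2 is Some P then arc I x.1 z.1 && (z.1 \in P) else false).

Definition inVk (k : K) (x : aux) : bool :=
  (x == (dest I k, None)) ||
  (knode I k x.1 &&
   (if x.2 is Some P then (P \in part x.1) && inKpart k x.1 P else false)).

Definition inEk (k : K) (x z : aux) : bool :=
  karc I k x.1 z.1 && inVk k x && inVk k z.

(* o'_k: the (unique) copy of o_k in V^k *)
Definition oprime (k : K) : aux :=
  odflt (orig I k, None) [pick x : aux | inVk k x && (x.1 == orig I k)].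

Definition tnode := (aux * 'I_T.+1)%type.
Definition tarc := (tnode * tnode)%type.
Definition dnode := (N * 'I_T.+1)%type.
Definition darc := (dnode * dnode)%type.

Definition is_src (k : K) (n : tnode) : bool :=
  (n.1 == oprime k) && (val n.2 == rel_t I k).
Definition is_snk (k : K) (n : tnode) : bool :=
  (n.1 == (dest I k, None)) && (val n.2 == dl I k).

(* flow conservation of (binary) flows xm (movement arcs) and xh
   (holdover arcs) at every node of a network with node set Vn *)
Definition conservation (Vn : pred tnode) (xm xh : tarc -> bool)
    (src snk : pred tnode) : Prop :=
  forall n, Vn n ->
    ((\sum_(e : tarc | e.1 == n) (xm e : nat)
       + \sum_(e : tarc | e.1 == n) (xh e : nat))%N%:Z
     - (\sum_(e : tarc | e.2 == n) (xm e : nat)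
       + \sum_(e : tarc | e.2 == n) (xh e : nat))%N%:Z
     = (src n : nat)%:Z - (snk n : nat)%:Z)%R.

Definition isMoveT (e : tarc) : bool :=
  let: ((x, t), (z, t')) := e in inE x z && ((val t + tau I x.1 z.1)%N == val t').

Definition isMoveTk (k : K) (e : tarc) : bool :=
  let: ((x, t), (z, t')) := e in inEk k x z && ((val t + tau I x.1 z.1)%N == val t').

Definition isHoldTk (k : K) (e : tarc) : bool :=
  let: ((x, t), (z, t')) := e in inVk k x && (z == x) && ((val t).+1 == val t').

Definition isAT (a : darc) : bool :=
  let: ((v, t), (w, t')) := a in arc I v w && ((val t + tau I v w)%N == val t').

Definition inET (a : darc) (e : tarc) : bool :=
  let: ((v, t), (w, t')) := a in
  let: ((x, s), (z, s')) := e in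
  (x.1 == v) && (s == t) && (z.1 == w) && (s' == t') && inV z &&
  (if x.2 is Some P then (P \in part v) && (w \in P) else false).

Definition feasT (xm xh : K -> tarc -> bool) (y : darc -> nat) : Prop :=
  [/\ (forall k e, xm k e -> isMoveTk k e),
      (forall k e, xh k e -> isHoldTk k e),
      (forall k, conservation (fun n => inVk k n.1) (xm k) (xh k)
                   (is_src k) (is_snk k))
    & (forall a : darc, isAT a ->
         (\sum_(k : K) \sum_(e : tarc | inET a e) dem I k * xm k e
           <= cap I a.1.1 a.2.1 * y a)%N) ].

Definition costT (xm : K -> tarc -> bool) (y : darc -> nat) : R :=
  \sum_(a : darc | isAT a) fc I a.1.1 a.2.1 * (y a)%:R
  + \sum_(k : K) \sum_(e : tarc | isMoveT e)
        uc I k e.1.1.1 e.2.1.1 * (dem I k)%:R * (xm k e : nat)%:R.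

Definition partial_network (VS : pred tnode) (ES : pred tarc) : Prop :=
  (forall n, VS n -> inV n.1) /\
  (forall e : tarc, ES e ->
     let: ((x, t), (z, t')) := e in
     [&& VS (x, t), VS (z, t'), inE x z,
         (val t' <= val t + tau I x.1 z.1)%N & (val t + tau I x.1 z.1 <= T)%N]).

Definition isHoldS (VS : pred tnode) (e : tarc) : bool :=
  let: ((x, t), (z, t')) := e in
  [&& VS (x, t), z == x, VS (x, t'), (val t < val t')%N &
      [forall r : 'I_T.+1, ((val t < val r)%N && (val r < val t')%N) ==> ~~ VS (x, r)]].

Definition isEkS (ES : pred tarc) (k : K) (e : tarc) : bool :=
  ES e && inEk k e.1.1 e.2.1.

Definition isFkS (VS : pred tnode) (k : K) (e : tarc) : bool :=
  isHoldS VS e && inVk k e.1.1.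

Definition inNS (VS : pred tnode) (n : dnode) : bool :=
  [exists u : aux, (u.1 == n.1) && inV u && VS (u, n.2)].

Definition isAS (VS : pred tnode) (a : darc) : bool :=
  let: ((v, t), (w, t')) := a in
  [&& inNS VS (v, t), arc I v w, (val t + tau I v w <= T)%N,
      inNS VS (w, t'), (val t' <= val t + tau I v w)%N &
      [forall r : 'I_T.+1,
         ((val t' < val r)%N && (val r <= val t + tau I v w)%N) ==> ~~ inNS VS (w, r)]].

Definition inESa (ES : pred tarc) (a : darc) (e : tarc) : bool :=
  let: ((v, t), (w, t')) := a in
  let: ((x, s), (z, s')) := e in
  [&& ES e, x.1 == v, s == t, z.1 == w, inV z &
      (if x.2 is Some P then (P \in part v) && (w \in P) else false)].

Definition feasS (VS : pred tnode) (ES : pred tarc)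
    (xm xh : K -> tarc -> bool) (y : darc -> nat) : Prop :=
  [/\ (forall k e, xm k e -> isEkS ES k e),
      (forall k e, xh k e -> isFkS VS k e),
      (forall k, conservation (fun n => VS n && inVk k n.1) (xm k) (xh k)
                   (is_src k) (is_snk k)),
      (forall a : darc, isAS VS a ->
         (\sum_(k : K) \sum_(e : tarc | inESa ES a e) dem I k * xm k e
           <= cap I a.1.1 a.2.1 * y a)%N)
    & (forall k, (\sum_(e : tarc | isEkS ES k e)
                    tau I e.1.1.1 e.2.1.1 * xm k e + rel_t I k <= dl I k)%N) ].

Definition costS (VS : pred tnode) (ES : pred tarc)
    (xm : K -> tarc -> bool) (y : darc -> nat) : R :=
  \sum_(a : darc | isAS VS a) fc I a.1.1 a.2.1 * (y a)%:R
  + \sum_(k : K) \sum_(e : tarc | ES e)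
        uc I k e.1.1.1 e.2.1.1 * (dem I k)%:R * (xm k e : nat)%:R.

Definition P1 (VS : pred tnode) : Prop :=
  [/\ (forall k, exists2 t : 'I_T.+1, val t = rel_t I k & VS (oprime k, t)),
      (forall k, exists2 t : 'I_T.+1, val t = dl I k & VS ((dest I k, None), t)),
      (forall v : N, VS ((v, None), ord_max))
    & (forall u : aux, inV u -> VS (u, ord0)) ].

Definition P2 (VS : pred tnode) (ES : pred tarc) : Prop :=
  forall (x z : aux) (t : 'I_T.+1), inE x z -> VS (x, t) ->
    (val t + tau I x.1 z.1 <= T)%N ->
    forall t' : 'I_T.+1,
      (val t' <= val t + tau I x.1 z.1)%N -> VS (z, t') ->
      (forall r : 'I_T.+1,
         (val t' < val r)%N -> (val r <= val t + tau I x.1 z.1)%N -> ~~ VS (z, r)) ->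
      ES ((x, t), (z, t')).

End SND.

From Pilot Require Import Defs.
From HB Require Import structures.
From mathcomp Require Import all_boot all_order all_algebra.
From mathcomp Require Import zify.
Import Order.TTheory GRing.Theory Num.Theory.
Set Implicit Arguments. Unset Strict Implicit. Unset Printing Implicit Defensive.

(* Round every timed node (x, t) down to the latest copy (x, t~) of x in V_S
   with t~ <= t; this is possible since (x, 0) is in V_S by (P1').  A movement
   arc ((x, t), (z, t + tau)) used by commodity k is sent to the arc of E_S
   from (x, t~) to the rounding of (z, t~ + tau), which exists by (P2'); since
   t~ + tau <= t + tau, holdover arcs of F_S continue it to the rounding of
   (z, t + tau).  A cut argument on the flow conservation of commodity k then
   shows that the image graph connects (o'_k, r_k) to (d^0_k, l_k); a simple
   path in it uses every arc once, and its movement arcs have pairwise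
   distinct preimages.  Hence its transit time and per-unit costs are at most
   those of the flow in G_T, at most one of its arcs leaves any node, and
   giving an arc of A_S the sum of y over the arcs of A_T that round to it
   respects capacities at no extra fixed cost, every arc of A_T rounding to at
   most one arc of A_S. *)

Section RoundDown.
Variables (n : nat) (P : pred 'I_n.+1).

Definition rdown (b : nat) : 'I_n.+1 := inord (\max_(r : 'I_n.+1 | (r <= b) && P r) r).

Lemma rdownE b : rdown b = \max_(r : 'I_n.+1 | (r <= b) && P r) r :> nat.
Proof. by rewrite inordK // ltnS; apply/bigmax_leqP => r _; rewrite -ltnS. Qed.

Lemma rdown_le b : rdown b <= b.
Proof. by rewrite rdownE; apply/bigmax_leqP => r /andP[]. Qed.

Lemma rdown_max b (r : 'I_n.+1) : r <= b -> P r -> r <= rdown b.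
Proof. by move=> rb Pr; rewrite rdownE (leq_bigmax_cond r) ?rb. Qed.

Lemma rdown_gap b (r : 'I_n.+1) : rdown b < r -> r <= b -> ~~ P r.
Proof. by move=> ltr rb; apply/negP => /(rdown_max rb); rewrite leqNgt ltr. Qed.

Lemma rdown_mono b1 b2 : b1 <= b2 -> rdown b1 <= rdown b2.
Proof.
move=> le12; rewrite [X in X <= _]rdownE; apply/bigmax_leqP => r /andP[rb Pr].
exact/rdown_max/Pr/(leq_trans rb).
Qed.

Lemma rdown_id (t : 'I_n.+1) : P t -> rdown t = t.
Proof. by move=> Pt; apply/val_inj/eqP; rewrite eqn_leq rdown_le rdown_max. Qed.

Hypothesis P0 : P ord0.

Lemma rdownP b : P (rdown b).
Proof.
have : 0 < #|[pred r : 'I_n.+1 | (r <= b) && P r]|.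
  by apply/card_gt0P; exists ord0; rewrite inE /= P0.
case/(eq_bigmax_cond (fun r : 'I_n.+1 => val r)) => r; rewrite inE => /andP[_ Pr] maxE.
suff -> : rdown b = r by [].
by apply: val_inj; rewrite /= rdownE -maxE; apply: eq_bigl => i; rewrite inE.
Qed.

End RoundDown.

Section PathArcs.
Variable V : eqType.

Definition path_arcs (a : V) (p : seq V) : seq (V * V) := zip (belast a p) p.

Lemma path_arcsP (r : rel V) a p e : path r a p -> e \in path_arcs a p -> r e.1 e.2.
Proof.
elim: p a => [|b p IH] a //= /andP[rab /IH{}IH].
by rewrite inE => /predU1P[-> //|].
Qed.

Lemma path_arcs_uniq a p : uniq p -> uniq (path_arcs a p).
Proof. exact: zip_uniqr. Qed.

Lemma count_path_arcs_tail a p n :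
  count (fun e => e.1 == n) (path_arcs a p) = count_mem n (belast a p).
Proof. by rewrite -(unzip1_zip (s := belast a p) (t := p)) ?size_belast // count_map. Qed.

Lemma count_path_arcs_head a p n :
  count (fun e => e.2 == n) (path_arcs a p) = count_mem n p.
Proof. by rewrite -[in RHS](unzip2_zip (s := belast a p) (t := p)) ?size_belast // count_map. Qed.

Lemma path_arcs_balance a p n :
  count (fun e => e.1 == n) (path_arcs a p) + (last a p == n)
  = count (fun e => e.2 == n) (path_arcs a p) + (a == n).
Proof.
rewrite count_path_arcs_tail count_path_arcs_head.
have := count_cat (pred1 n) (belast a p) [:: last a p].
by rewrite cats1 -lastI /= addn0 => <-; rewrite addnC.
Qed.

Lemma count_path_arcs_tail_le1 a p n :
  uniq (a :: p) -> count (fun e => e.1 == n) (path_arcs a p) <= 1.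
Proof.
rewrite lastI rcons_uniq => /andP[_ uniq_belast].
by rewrite count_path_arcs_tail count_uniq_mem ?leq_b1.
Qed.

End PathArcs.

Lemma sum_mem_uniq (T : finType) (s : seq T) (P : pred T) :
  uniq s -> \sum_(e | P e) (e \in s) = count P s.
Proof.
move=> us; rewrite -sum1_count [RHS]big_mkcond big_uniq //=.
rewrite [LHS]big_mkcond [RHS]big_mkcond /=.
by apply: eq_bigr => e _; case: (P e); case: (e \in s).
Qed.

Lemma sum_fibers (V J : finType) (f : V -> J) (S : pred J) (F : V -> nat) :
  \sum_(j | S j) \sum_(e | f e == j) F e = \sum_(e | S (f e)) F e.
Proof.
rewrite [RHS](partition_big f S) //; apply: eq_bigr => j Sj.
by apply: eq_bigl => e; case: eqP => [->|]; rewrite ?Sj ?andbF.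
Qed.

Lemma sum_mul_eq1 (T : finType) (S : pred T) (F : T -> nat) a :
  S a -> \sum_(j | S j) F j * (j == a) = F a.
Proof.
move=> Sa; rewrite (bigD1 a) //= eqxx muln1 big1 ?addn0 // => j /andP[_ /negbTE->].
exact: muln0.
Qed.

Lemma ler_sum_inj (R : numDomainType) (A B : finType) (X : pred A) (Y : pred B)
    (h : A -> B) (F : B -> R) :
  {in X &, injective h} -> (forall a, X a -> Y (h a)) -> (forall b, Y b -> 0 <= F b)%R ->
  (\sum_(a | X a) F (h a) <= \sum_(b | Y b) F b)%R.
Proof.
move=> h_inj XY F_ge0; rewrite (eq_bigl (mem X)) // -big_imset //=.
rewrite [X in (_ <= X)%R](bigID (mem (h @: X))) /=.
rewrite [X in (_ <= X + _)%R](eq_bigl (fun b => b \in h @: X)) => [|b].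
  by rewrite lerDl sumr_ge0 // => b /andP[/F_ge0].
case hb: (b \in h @: X); rewrite ?andbF ?andbT //.
by case/imsetP: hb => a Xa ->; rewrite XY.
Qed.

Lemma leq_sum_inj (A B : finType) (X : pred A) (Y : pred B) (h : A -> B) (F : B -> nat) :
  {in X &, injective h} -> (forall a, X a -> Y (h a)) ->
  \sum_(a | X a) F (h a) <= \sum_(b | Y b) F b.
Proof.
move=> h_inj XY; rewrite -(ler_nat int) !natr_sum.
by apply: ler_sum_inj => // b _; apply: ler0n.
Qed.

Section FlowConservation.
Variables (V : finType) (D : pred V) (w : V * V -> nat) (a b : V).
Hypothesis conserve : forall n, D n ->
  \sum_(e | e.1 == n) w e + (n == b) = \sum_(e | e.2 == n) w e + (n == a).

Lemma flow_cut (S : pred V) :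
  {subset S <= D} -> (forall e, 0 < w e -> S e.1 -> S e.2) -> S a -> S b.
Proof.
move=> SD S_closed Sa.
have balance : \sum_(e | S e.1) w e + \sum_(n | S n) 1 * (n == b)
             = \sum_(e | S e.2) w e + \sum_(n | S n) 1 * (n == a).
  rewrite -(sum_fibers (fun e : V * V => e.1)) -(sum_fibers (fun e : V * V => e.2)).
  rewrite -!big_split /=.
  by apply: eq_bigr => n /SD/conserve; rewrite !mul1n.
have out_le_in : \sum_(e | S e.1) w e <= \sum_(e | S e.2) w e.
  rewrite [X in X <= _]big_mkcond [X in _ <= X]big_mkcond leq_sum // => e _.
  by case S1: (S e.1) => //; case: (posnP (w e)) => [-> | /S_closed/(_ S1) ->].
apply/contraT => nSb.
have no_b : \sum_(n | S n) 1 * (n == b) = 0.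
  by apply: big1 => n; case: (n =P b) => [-> Sb | //]; rewrite Sb in nSb.
move: balance; rewrite no_b (sum_mul_eq1 (fun=> 1) Sa); lia.
Qed.

Hypothesis w_supp : forall e, 0 < w e -> D e.1 && D e.2.

Lemma flow_potential (pot : V -> nat) : D a -> D b ->
  \sum_e w e * pot e.2 + pot a = \sum_e w e * pot e.1 + pot b.
Proof.
move=> Da Db.
have weighted (f : V * V -> V) : (forall e, 0 < w e -> D (f e)) ->
    \sum_(n | D n) pot n * \sum_(e | f e == n) w e = \sum_e w e * pot (f e).
  move=> fD; under eq_bigr => n _.
    rewrite big_distrr (eq_bigr (fun e => w e * pot (f e))) => [|e /eqP->]; last exact: mulnC.
  over.
  rewrite (sum_fibers f) [RHS](bigID (fun e => D (f e))) /= [X in _ = _ + X]big1 ?addn0 //.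
  by move=> e /negP nD; case: (posnP (w e)) => [-> // | /fD].
have : \sum_(n | D n) pot n * (\sum_(e | e.1 == n) w e + (n == b))
     = \sum_(n | D n) pot n * (\sum_(e | e.2 == n) w e + (n == a)).
  by apply: eq_bigr => n /conserve ->.
under eq_bigr do rewrite mulnDr. under [RHS]eq_bigr do rewrite mulnDr.
by rewrite !big_split /= !weighted ?sum_mul_eq1 // => e /w_supp /andP[].
Qed.
End FlowConservation.


Section Instance.
Variables (R : realFieldType) (I : instance R) (part : node I -> {set {set node I}}).
Hypotheses (wf : wf_instance I) (vp : valid_partition part).
Local Notation T := (Tmax I).

Lemma conservationP (Vn : pred (tnode I)) (xm xh : tarc I -> bool) (src snk : pred (tnode I)) :
  conservation Vn xm xh src snk <->
  (forall n, Vn n -> \sum_(e | e.1 == n) (xm e + xh e) + snk n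
                     = \sum_(e | e.2 == n) (xm e + xh e) + src n).
Proof.
have int_balance (a b c d : nat) : (a%:Z - b%:Z = c%:Z - d%:Z)%R <-> a + d = b + c by lia.
by split=> cons n /cons; rewrite !big_split /= => /int_balance.
Qed.

Lemma dl_le_T k : dl I k <= T.
Proof. exact: leq_bigmax. Qed.

Lemma inVk_inV k x : inVk part k x -> inV part x.
Proof. by case: x => v [P|] //; rewrite /inVk /= => /orP[/eqP[] // | /and3P[]]. Qed.

Lemma inEk_inE k x z : inEk part k x z -> Defs.inE part x z.
Proof.
case: wf => -[_ _ karc_sub _ dest_sink] _ /andP[/andP[kxz xk] zk].
rewrite /Defs.inE (inVk_inV xk) (inVk_inV zk) /=.
case/orP: xk => [/eqP xE | /andP[_]]; first by move: kxz; rewrite xE (negbTE (dest_sink _ _)).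
case: x kxz => v [P|] // kvz /andP[_ /andP[_ sub_P]].
have [-> _ _] := karc_sub _ _ _ kvz.
by apply: (subsetP sub_P); rewrite inE.
Qed.

Lemma oprime_inVk k : inVk part k (oprime part k).
Proof.
rewrite /oprime; case: pickP => [x /andP[] // | none].
case: wf => -[_ _ _ /(_ k)[ko _] _] has_succ.
have [od | nod] := eqVneq (orig I k) (dest I k).
  by have := none (dest I k, None); rewrite /inVk /= eqxx od eqxx.
have [w kow] := has_succ k _ ko nod.
have out_nonempty : outDk k (orig I k) != set0 by apply/set0Pn; exists w; rewrite inE.
have [P Pin sub_P] := (proj2 (vp (orig I k))) k out_nonempty.
by have := none (orig I k, Some P); rewrite /inVk /= ko Pin /inKpart out_nonempty sub_P !eqxx orbT.
Qed.

Lemma pblock_partE v P w : P \in part v -> w \in P -> pblock (part v) w = P.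
Proof. by have /and3P[_ triv _] := proj1 (vp v); apply: def_pblock. Qed.

Lemma isAT_arc a : isAT a -> Defs.arc I a.1.1 a.2.1.
Proof. by case: a => [[v t] [w t']] /andP[]. Qed.

Lemma fc_ge0 v w : Defs.arc I v w -> (0 <= fc I v w)%R.
Proof. by case: wf => -[arc_pos _ _ _ _] _ /arc_pos[_ /ltW]. Qed.

Lemma uc_ge0 k v w : Defs.arc I v w -> (0 <= uc I k v w)%R.
Proof. by case: wf => -[arc_pos _ _ _ _] _ /arc_pos[_ _ _ /(_ k)/ltW]. Qed.

Lemma isAS_unique (VS : pred (tnode I)) v t w (t1 t2 : 'I_T.+1) :
  isAS part VS ((v, t), (w, t1)) -> isAS part VS ((v, t), (w, t2)) -> t1 = t2.
Proof.
move=> /and5P[_ _ _ N1 /andP[le1 gap1]] /and5P[_ _ _ N2 /andP[le2 gap2]].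
case: (ltngtP t1 t2) => [lt12 | lt21 | /val_inj //].
  by move: (forallP gap1 t2); rewrite lt12 le2 N2.
by move: (forallP gap2 t1); rewrite lt21 le1 N1.
Qed.

Section Transfer.
Variables (VS : pred (tnode I)) (ES : pred (tarc I)).
Hypotheses (p1 : P1 part VS) (p2 : P2 part VS ES).
Variables (xm xh : comm I -> tarc I -> bool) (y : darc I -> nat).
Hypothesis fT : feasT part xm xh y.

Definition round_time (x : aux I) : nat -> 'I_T.+1 := rdown (fun r => VS (x, r)).

Lemma VS_round_time x b : inV part x -> VS (x, round_time x b).
Proof.
by case: p1 => _ _ _ VS0 /VS0 VSx0; exact: (rdownP (P := fun r => VS (x, r))).
Qed.

Definition round_node (n : tnode I) : tnode I := (n.1, round_time n.1 n.2).

(* The head is rounded from the rounded tail time, so that (P2') provides the arc. *)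
Definition round_arc (e : tarc I) : tarc I :=
  let s := round_time e.1.1 e.1.2 in
  ((e.1.1, s), (e.2.1, round_time e.2.1 (s + tau I e.1.1.1 e.2.1.1))).

Lemma round_node_id n : VS n -> round_node n = n.
Proof. by case: n => x t VSt; rewrite /round_node /round_time rdown_id. Qed.

Definition srcT k : tnode I := (oprime part k, inord (rel_t I k)).
Definition snkT k : tnode I := ((dest I k, None), inord (dl I k)).

Lemma rel_t_le_T k : rel_t I k <= T.
Proof. by case: p1 => src_in _ _ _; have [t <- _] := src_in k; exact: leq_ord. Qed.

Lemma is_srcE k n : is_src part k n = (n == srcT k).
Proof.
case: n => x t; rewrite /is_src /srcT xpair_eqE; congr (_ && _).
by rewrite -val_eqE /= inordK // ltnS rel_t_le_T.
Qed.

Lemma is_snkE k n : is_snk k n = (n == snkT k).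
Proof.
case: n => x t; rewrite /is_snk /snkT xpair_eqE; congr (_ && _).
by rewrite -val_eqE /= inordK // ltnS dl_le_T.
Qed.

Lemma VS_srcT k : VS (srcT k).
Proof. by case: p1 => /(_ k)[t tE VSt] _ _ _; rewrite /srcT -tE inord_val. Qed.

Lemma VS_snkT k : VS (snkT k).
Proof. by case: p1 => _ /(_ k)[t tE VSt] _ _; rewrite /snkT -tE inord_val. Qed.

Definition image_arc k (e : tarc I) : bool :=
  isEkS part ES k e && [exists f, xm k f && (round_arc f == e)].

Definition image_graph k : rel (tnode I) :=
  fun n n' => image_arc k (n, n') || isFkS part VS k (n, n').

Lemma holdover_connect k x (s1 s2 : 'I_T.+1) : inVk part k x ->
  VS (x, s1) -> VS (x, s2) -> s1 <= s2 -> connect (image_graph k) (x, s1) (x, s2).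
Proof.
move=> xk VS1; have [m] := ubnP (val s2); elim: m s2 => // m IH s2 /ltnSE s2m VS2.
rewrite leq_eqVlt => /predU1P[/val_inj-> | lt12]; first exact: connect0.
have le12 : s1 <= s2.-1 by rewrite -ltnS (ltn_predK lt12).
set s := round_time x s2.-1.
have s1s : s1 <= s by apply: rdown_max.
have ss2 : s < s2.
  by rewrite (leq_ltn_trans (rdown_le _ _)) // ltn_predL (leq_ltn_trans _ lt12).
apply: connect_trans (IH s (leq_trans ss2 s2m) (VS_round_time _ (inVk_inV xk)) s1s) _.
apply: connect1; apply/orP; right.
rewrite /isFkS /isHoldS /= xk andbT VS_round_time ?(inVk_inV xk) // eqxx VS2 ss2 /=.
apply/forallP => r; apply/implyP => /andP[sr rs2]; apply: rdown_gap sr _.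
by rewrite -ltnS (ltn_predK lt12).
Qed.

Lemma round_move k e : xm k e -> connect (image_graph k) (round_node e.1) (round_node e.2).
Proof.
case: fT => moveT _ _ _ xe; have := moveT _ _ xe.
case: e xe => [[x t] [z t']] xe /andP[Ekxz /eqP tt'] /=.
have Exz := inEk_inE Ekxz; have /andP[/andP[Vx Vz] _] := Exz.
set b := round_time x t + tau I x.1 z.1.
have b_le : b <= t' by rewrite /b -tt' leq_add2r rdown_le.
apply: (@connect_trans _ _ (z, round_time z b)).
  apply: connect1; apply/orP; left; rewrite /image_arc /isEkS /= Ekxz andbT.
  apply/andP; split; last by apply/existsP; exists ((x, t), (z, t')); rewrite xe eqxx.
  apply: p2 => /=; [exact: Exz | exact: VS_round_time | exact: leq_trans b_le (leq_ord t') |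
                    exact: rdown_le | exact: VS_round_time | exact: rdown_gap].
case/andP: Ekxz => _ zk; apply: holdover_connect => //; try exact: VS_round_time.
exact: rdown_mono.
Qed.

Lemma round_hold k e : xh k e -> connect (image_graph k) (round_node e.1) (round_node e.2).
Proof.
case: fT => _ holdT _ _ /holdT; case: e => [[x t] [z t']] /andP[/andP[xk /eqP->] /eqP tt'] /=.
apply: holdover_connect => //; try exact: VS_round_time (inVk_inV xk).
by apply: rdown_mono; rewrite -tt'.
Qed.

Definition flowT k (e : tarc I) : nat := xm k e + xh k e.

Lemma round_flow_arc k e :
  0 < flowT k e -> connect (image_graph k) (round_node e.1) (round_node e.2).
Proof.
rewrite /flowT; case xe: (xm k e); first by rewrite round_move.
by case he: (xh k e) => //; rewrite round_hold.
Qed.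

Lemma flowT_supp k e : 0 < flowT k e -> inVk part k e.1.1 && inVk part k e.2.1.
Proof.
case: fT => moveT holdT _ _; rewrite /flowT.
case xe: (xm k e); last case he: (xh k e) => //= _.
- by move: (moveT _ _ xe); case: e {xe} => [[x t] [z t']] /andP[/andP[/andP[_ ->] ->] _].
- move: (holdT _ _ he); case: e {xe he} => [[x t] [z t']].
  by case/andP=> /andP[xk /eqP->] _; rewrite xk.
Qed.

Lemma flowT_conserve k n : inVk part k n.1 ->
  \sum_(e | e.1 == n) flowT k e + (n == snkT k)
  = \sum_(e | e.2 == n) flowT k e + (n == srcT k).
Proof.
case: fT => _ _ /(_ k)/conservationP cons _ /cons.
by rewrite is_srcE is_snkE.
Qed.

Lemma srcT_inVk k : inVk part k (srcT k).1.
Proof. exact: oprime_inVk. Qed.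

Lemma snkT_inVk k : inVk part k (snkT k).1.
Proof. by rewrite /inVk eqxx. Qed.

Lemma round_flow_connect k : connect (image_graph k) (srcT k) (snkT k).
Proof.
pose S n := inVk part k n.1 && connect (image_graph k) (srcT k) (round_node n).
suff /andP[_] : S (snkT k) by rewrite round_node_id ?VS_snkT.
apply: (flow_cut (@flowT_conserve k)) => [n /andP[] // | e we /andP[_ reach_e1] |].
  rewrite /S (proj2 (andP (flowT_supp we))) /=.
  exact: connect_trans reach_e1 (round_flow_arc we).
by rewrite /S srcT_inVk round_node_id ?VS_srcT ?connect0.
Qed.

Lemma simple_round_path k : exists p,
  [&& path (image_graph k) (srcT k) p, last (srcT k) p == snkT k & uniq (srcT k :: p)].
Proof.
case/connectP: (round_flow_connect k) => p p_path ->.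
by case: (shortenP p_path) => q q_path q_uniq _; exists q; rewrite q_path q_uniq eqxx.
Qed.

Definition route k : seq (tarc I) := path_arcs (srcT k) (xchoose (simple_round_path k)).

Lemma route_spec k :
  [&& path (image_graph k) (srcT k) (xchoose (simple_round_path k)),
      last (srcT k) (xchoose (simple_round_path k)) == snkT k &
      uniq (srcT k :: xchoose (simple_round_path k))].
Proof. exact: (xchooseP (simple_round_path k)). Qed.

Lemma route_image_graph k e : e \in route k -> image_graph k e.1 e.2.
Proof. by case/and3P: (route_spec k) => p_path _ _; apply: path_arcsP. Qed.

Lemma route_uniq k : uniq (route k).
Proof. by case/and3P: (route_spec k) => _ _ /andP[_]; apply: path_arcs_uniq. Qed.

Lemma route_balance k n :
  \sum_(e | e.1 == n) (e \in route k) + (n == snkT k)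
  = \sum_(e | e.2 == n) (e \in route k) + (n == srcT k).
Proof.
case/and3P: (route_spec k) => _ /eqP p_last _.
rewrite !sum_mem_uniq ?route_uniq // ![n == _]eq_sym -p_last.
exact: path_arcs_balance.
Qed.

Lemma route_out_le1 k n : \sum_(e | e.1 == n) (e \in route k) <= 1.
Proof.
case/and3P: (route_spec k) => _ _ p_uniq.
by rewrite sum_mem_uniq ?route_uniq // count_path_arcs_tail_le1.
Qed.

Definition xmS k e : bool := (e \in route k) && image_arc k e.
Definition xhS k e : bool := (e \in route k) && ~~ image_arc k e.

Definition preimage k e : tarc I := odflt e [pick f | xm k f && (round_arc f == e)].

Lemma preimageP k e :
  image_arc k e -> xm k (preimage k e) && (round_arc (preimage k e) == e).
Proof.
case/andP => _ /existsP[f xf]; rewrite /preimage.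
by case: pickP => [g // | none]; have := none f; rewrite xf.
Qed.

Lemma preimage_inj k : {in xmS k &, injective (preimage k)}.
Proof.
move=> e1 e2 /andP[_ /preimageP/andP[_ /eqP E1]] /andP[_ /preimageP/andP[_ /eqP E2]] E.
by rewrite -E1 -E2 E.
Qed.

Lemma xmS_ES k e : xmS k e -> isEkS part ES k e.
Proof. by case/andP => _ /andP[]. Qed.

Lemma xhS_FS k e : xhS k e -> isFkS part VS k e.
Proof.
case: e => n n' /andP[/route_image_graph /orP[img | //] not_img].
by rewrite img in not_img.
Qed.

Lemma xmS_conserve k :
  conservation (fun n => VS n && inVk part k n.1) (xmS k) (xhS k) (is_src part k) (is_snk k).
Proof.
apply/conservationP => n _; rewrite is_srcE is_snkE.
have route_split e : xmS k e + xhS k e = (e \in route k).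
  by rewrite /xmS /xhS; case: (_ \in _); case: image_arc.
rewrite !(eq_bigr _ (fun e _ => route_split e)); exact: route_balance.
Qed.

Lemma leq_sum_xmS k (F : tarc I -> nat) : (forall f, F (round_arc f) = F f) ->
  \sum_(e | xmS k e) F e <= \sum_(f | xm k f) F f.
Proof.
move=> F_round.
rewrite (eq_bigr (F \o preimage k)) => [|e /andP[_ /preimageP/andP[_ /eqP E]]].
  by apply: leq_sum_inj (@preimage_inj k) _ => e /andP[_ /preimageP/andP[]].
by rewrite -{1}E F_round.
Qed.

Lemma ler_sum_xmS k (F : tarc I -> R) : (forall f, F (round_arc f) = F f) ->
  (forall f, xm k f -> 0 <= F f)%R ->
  (\sum_(e | xmS k e) F e <= \sum_(f | xm k f) F f)%R.
Proof.
move=> F_round F_ge0.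
rewrite (eq_bigr (F \o preimage k)) => [|e /andP[_ /preimageP/andP[_ /eqP E]]].
  by apply: ler_sum_inj (@preimage_inj k) _ F_ge0 => e /andP[_ /preimageP/andP[]].
by rewrite -{1}E F_round.
Qed.

Definition arc_tau (e : tarc I) : nat := tau I e.1.1.1 e.2.1.1.

Lemma flow_transit_time k : \sum_(f | xm k f) arc_tau f + rel_t I k <= dl I k.
Proof.
have shift e : flowT k e * e.2.2 = flowT k e * e.1.2 + (xm k e * arc_tau e + xh k e).
  case: fT => moveT holdT _ _; rewrite /flowT.
  case xe: (xm k e); case he: (xh k e) => //=; rewrite ?muln0 ?mul0n ?mul1n ?add0n ?addn0 //.
  - move: (moveT _ _ xe) (holdT _ _ he); case: e {xe he} => [[x t] [z t']] /=.
    by move=> /andP[_ /eqP mv] /andP[_ /eqP hd]; rewrite /arc_tau /=; lia.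
  - by move: (moveT _ _ xe); case: e {xe he} => [[x t] [z t']] /andP[_ /eqP <-].
  - by move: (holdT _ _ he); case: e {xe he} => [[x t] [z t']] /andP[_ /eqP <-]; rewrite addn1.
have := flow_potential (@flowT_conserve k) (@flowT_supp k) (fun n => val n.2)
  (srcT_inVk k) (snkT_inVk k).
rewrite (eq_bigr _ (fun e _ => shift e)) big_split /= -addnA => /addnI.
rewrite /srcT /snkT /= !inordK ?ltnS ?rel_t_le_T ?dl_le_T // => <-.
rewrite leq_add2r big_mkcond /= leq_sum // => e _.
by case: (xm k e); rewrite ?mul1n ?leq_addr.
Qed.

Lemma xmS_transit_time k :
  \sum_(e | isEkS part ES k e) tau I e.1.1.1 e.2.1.1 * xmS k e + rel_t I k <= dl I k.
Proof.
apply: leq_trans (flow_transit_time k); rewrite leq_add2r.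
rewrite big_mkcond (eq_bigr (fun e => if xmS k e then arc_tau e else 0)) -?big_mkcond /=.
  exact: leq_sum_xmS.
move=> e _; case xe: (xmS k e); last by rewrite muln0 if_same.
by rewrite (xmS_ES xe) muln1.
Qed.

(* The copy v^i of the tail v of a = vw, where vw is in A_i. *)
Definition tail_copy (a : darc I) : aux I := (a.1.1, Some (pblock (part a.1.1) a.2.1)).

Definition rounds_to (a a' : darc I) : bool :=
  [&& a.1.1 == a'.1.1, a.2.1 == a'.2.1 & round_time (tail_copy a) a.1.2 == a'.1.2].

Definition yS (a' : darc I) : nat := \sum_(a | isAT a && rounds_to a a') y a.

Lemma inESa_ends a' e :
  inESa part ES a' e -> e.1 = (tail_copy a', a'.1.2) /\ e.2.1.1 = a'.2.1.
Proof.
case: a' => [[v t] [w t']]; case: e => [[x s] [z s']]; rewrite /inESa /tail_copy /=.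
case/and5P=> _ /eqP xv /eqP-> /eqP-> /andP[_]; case: x xv => x [P|] //= -> /andP[Pin wP].
by rewrite (pblock_partE Pin wP).
Qed.

Lemma xmS_ESa_le1 k a' : \sum_(e | inESa part ES a' e) xmS k e <= 1.
Proof.
apply: leq_trans (route_out_le1 k (tail_copy a', a'.1.2)).
rewrite [X in X <= _]big_mkcond [X in _ <= X]big_mkcond leq_sum // => e _.
case ae: (inESa part ES a' e) => //; rewrite (proj1 (inESa_ends ae)) eqxx.
by rewrite /xmS; case: (e \in route k); rewrite ?leq_b1.
Qed.

Lemma xmS_ESa_covered k a' e : inESa part ES a' e -> xmS k e ->
  exists2 a, isAT a && rounds_to a a' & exists2 f, inET part a f & xm k f.
Proof.
move=> /inESa_ends[tail_e head_e] /andP[_ /preimageP/andP[xf /eqP fE]].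
move: (preimage k e) xf fE => [[x t] [z t']] xf fE.
case: fT => moveT _ _ _; have /andP[Ekxz /eqP tt'] := moveT _ _ xf.
have /andP[/andP[_ Vz] arc_xz] := inEk_inE Ekxz.
case: x xf fE Ekxz tt' arc_xz => v [P|] // xf fE Ekxz tt' /andP[vz zP].
have Pin : P \in part v by have /andP[/andP[]] := inEk_inE Ekxz.
move: tail_e head_e; rewrite -fE /= => -[vE _ rdE] zE.
exists ((v, t), (z.1, t')).
  by rewrite /isAT /rounds_to /tail_copy /= vz tt' (pblock_partE Pin zP) rdE vE zE !eqxx.
by exists ((v, Some P), t, (z, t')); rewrite // /inET /= !eqxx Vz Pin zP.
Qed.

Lemma capacity_rounded k a' :
  \sum_(e | inESa part ES a' e) dem I k * xmS k e
  <= \sum_(a | isAT a && rounds_to a a') \sum_(f | inET part a f) dem I k * xm k f.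
Proof.
rewrite -big_distrr /=.
case: (pickP (fun e => inESa part ES a' e && xmS k e)) => [e /andP[ae xe] | none]; last first.
  by rewrite big1 ?muln0 // => e ae; move: (none e); rewrite ae /= => ->.
have [a aa' [f af xf]] := xmS_ESa_covered ae xe.
apply: leq_trans (_ : dem I k <= _).
  by rewrite -[X in _ <= X]muln1 leq_mul2l xmS_ESa_le1 orbT.
by rewrite (bigD1 a) //= (bigD1 f) //= xf muln1 -addnA leq_addr.
Qed.

Lemma capacityS a' :
  \sum_k \sum_(e | inESa part ES a' e) dem I k * xmS k e <= cap I a'.1.1 a'.2.1 * yS a'.
Proof.
apply: (@leq_trans (\sum_k \sum_(a | isAT a && rounds_to a a')
                      \sum_(f | inET part a f) dem I k * xm k f)).
  by apply: leq_sum => k _; apply: capacity_rounded.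
rewrite exchange_big /= /yS big_distrr /= leq_sum // => a /andP[aT /and3P[/eqP<- /eqP<- _]].
by case: fT => _ _ _ /(_ a aT).
Qed.

Lemma rounds_to_unique a a1 a2 : isAS part VS a1 -> isAS part VS a2 ->
  rounds_to a a1 -> rounds_to a a2 -> a1 = a2.
Proof.
case: a1 a2 => [[v1 t1] [w1 s1]] [[v2 t2] [w2 s2]]; rewrite /rounds_to /=.
move=> AS1 AS2 /and3P[/eqP E1 /eqP E2 /eqP E3] /and3P[/eqP F1 /eqP F2 /eqP F3]; subst.
by rewrite (isAS_unique AS1 AS2).
Qed.

Local Open Scope ring_scope.

Lemma fixed_cost_le :
  \sum_(a' | isAS part VS a') fc I a'.1.1 a'.2.1 * (yS a')%:R
  <= \sum_(a | isAT a) fc I a.1.1 a.2.1 * (y a)%:R.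
Proof.
have -> : \sum_(a' | isAS part VS a') fc I a'.1.1 a'.2.1 * (yS a')%:R
        = \sum_(a' | isAS part VS a') \sum_(a | isAT a && rounds_to a a')
            fc I a.1.1 a.2.1 * (y a)%:R.
  apply: eq_bigr => a' _; rewrite /yS natr_sum big_distrr /=.
  by apply: eq_bigr => a /andP[_ /and3P[/eqP-> /eqP-> _]].
rewrite (exchange_big_dep (@isAT _ I)) /=; last by move=> a' a _ /andP[].
apply: ler_sum => a aT.
have c_ge0 : 0 <= fc I a.1.1 a.2.1 * (y a)%:R by rewrite mulr_ge0 ?fc_ge0 ?isAT_arc.
case: (pickP (fun a' => isAS part VS a' && rounds_to a a')) => [a0 /andP[AS0 r0] | none].
  rewrite (bigD1 a0) ?AS0 ?aT ?r0 //= big1 ?addr0 // => a' /andP[/andP[AS' r'] ne].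
  by rewrite (rounds_to_unique AS' AS0 r' r0) eqxx in ne.
by rewrite big1 // => a' /and3P[AS' _ r']; move: (none a'); rewrite AS' r'.
Qed.

Lemma xm_arc k f : xm k f -> isMoveT part f && Defs.arc I f.1.1.1 f.2.1.1.
Proof.
case: fT => moveT _ _ _ /moveT; case: f => [[x t] [z t']] /andP[Ekxz tt'].
rewrite /isMoveT (inEk_inE Ekxz) tt' /=.
by case: wf => -[_ _ karc_sub _ _] _; case/andP: Ekxz => /andP[/karc_sub[]].
Qed.

Lemma variable_cost_le :
  \sum_k \sum_(e | ES e) uc I k e.1.1.1 e.2.1.1 * (dem I k)%:R * (xmS k e)%:R
  <= \sum_k \sum_(e | isMoveT part e) uc I k e.1.1.1 e.2.1.1 * (dem I k)%:R * (xm k e)%:R.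
Proof.
apply: ler_sum => k _.
pose cost (e : tarc I) : R := uc I k e.1.1.1 e.2.1.1 * (dem I k)%:R.
have restrict (D sel : pred (tarc I)) : (forall e, sel e -> D e) ->
    \sum_(e | D e) cost e * (sel e)%:R = \sum_(e | sel e) cost e.
  move=> selD; rewrite big_mkcond [RHS]big_mkcond; apply: eq_bigr => e _.
  by case se: (sel e); rewrite ?(selD e se) ?mulr1 ?mulr0 ?if_same.
rewrite !restrict => [|e /xm_arc/andP[] //|e /xmS_ES/andP[] //].
apply: ler_sum_xmS => // f /xm_arc/andP[_ f_arc].
by rewrite /cost mulr_ge0 ?uc_ge0.
Qed.

Lemma feasS_transfer : feasS part VS ES xmS xhS yS.
Proof.
split=> [k e /xmS_ES | k e /xhS_FS | k | a' _ | k] //.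
- exact: xmS_conserve.
- exact: capacityS.
- exact: xmS_transit_time.
Qed.

Lemma costS_transfer_le : costS part VS ES xmS yS <= costT part xm y.
Proof. exact: lerD fixed_cost_le variable_cost_le. Qed.

End Transfer.
End Instance.

Local Open Scope ring_scope.

Theorem theorem3 (R : realFieldType) (I : instance R)
    (part : node I -> {set {set node I}})
    (VS : pred (tnode I)) (ES : pred (tarc I)) :
  wf_instance I ->
  valid_partition part ->
  partial_network part VS ES ->
  P1 part VS ->
  P2 part VS ES ->
  forall (xm xh : comm I -> tarc I -> bool) (y : darc I -> nat),
    feasT part xm xh y ->
    exists (xm' xh' : comm I -> tarc I -> bool) (y' : darc I -> nat),
      feasS part VS ES xm' xh' y' /\
      costS part VS ES xm' y' <= costT part xm y.
Proof.
move=> wf vp _ p1 p2 xm xh y fT.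
exists (xmS wf vp p1 p2 fT), (xhS wf vp p1 p2 fT), (yS part VS y); split.
- exact: feasS_transfer.
- exact: costS_transfer_le.
Qed.
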